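(* Let $q$ be a prime power, $1\le k<n\le m$, let $g_1,\dots,g_n\in\mathbb{F}_{q^m}$ be linearly independent over $\mathbb{F}_q$, and let $\mathcal{G}$ be the Gabidulin code of dimension $k$ with respect to $g_1,\dots,g_n$. Then for every $f\in\mathcal{L}_q(x,\mathbb{F}_{q^m})$ with $\deg_q(f)=k$, the word $\sigma_f=(f(g_1),\dots,f(g_n))$ satisfies $d_H(\sigma_f,\mathcal{G})=n-k$, i.e. it is a deep hole of $\mathcal{G}$ in the Hamming metric (the Hamming covering radius of $\mathcal{G}$ being $n-k$). In particular $\mathcal{G}$ has at least $(q^m-1)q^{mk}$ deep holes in the Hamming metric.
   Context: A $q$-linearized polynomial over $\mathbb{F}_{q^m}$ is $L(x)=\sum_{i=0}^{d}a_ix^{q^i}$, $a_i\in\mathbb{F}_{q^m}$; if $a_d\ne0$, $d=\deg_q(L)$. $\mathcal{L}_q(x,\mathbb{F}_{q^m})$ is the set of these. $d_H$ is the Hamming distance, $d_H(\mathbf{u},C)=\min_{\mathbf{c}\in C}d_H(\mathbf{u},\mathbf{c})$; a deep hole in the Hamming metric is a word whose Hamming distance to the code equals the maximum over all words. The Gabidulin code of dimension $k$ with respect to $\mathbb{F}_q$-linearly independent $g_1,\dots,g_n$ is $\mathcal{G}=\{(v(g_1),\dots,v(g_n)) : v\in\mathcal{L}_q(x,\mathbb{F}_{q^m}),\ v=0\text{ or }\deg_q(v)<k\}$. *)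

From HB Require Import structures.
From mathcomp Require Import all_boot all_order all_algebra all_field.
Set Implicit Arguments. Unset Strict Implicit. Unset Printing Implicit Defensive.
Import GRing.Theory.
Local Open Scope ring_scope.

Definition is_prime_power (q : nat) : Prop :=
  exists p e : nat, prime p /\ (0 < e)%N /\ q = (p ^ e)%N.

Section Gab.
Variable L : finFieldType.

Definition in_Fq (q : nat) (x : L) : bool := x ^+ q == x.

Definition Fq_lin_indep (q n : nat) (g : 'I_n -> L) : Prop :=
  forall c : 'I_n -> L, (forall i, in_Fq q (c i)) ->
    \sum_(i < n) c i * g i = 0 -> forall i, c i = 0.

Definition qlin_eval (q d : nat) (a : {ffun 'I_d -> L}) (x : L) : L :=
  \sum_(i < d) a i * x ^+ (q ^ i).

Definition word n := {ffun 'I_n -> L}.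

(* Gabidulin code of dimension k: evaluations of q-polynomials v with
   v = 0 or deg_q v < k, i.e. v = sum_{i<k} a_i x^(q^i) *)
Definition gabidulin (q n k : nat) (g : 'I_n -> L) : {set word n} :=
  [set [ffun i => qlin_eval q a (g i)] | a : {ffun 'I_k -> L}].

Definition dH n (u c : word n) : nat := #|[set i | u i != c i]|.

(* Hamming distance to a code (min over codewords; n is a harmless
   default since dH <= n) *)
Definition dist_code n (u : word n) (C : {set word n}) : nat :=
  \big[minn/n]_(c in C) dH u c.

Definition covering_radius n (C : {set word n}) : nat :=
  \max_(u : word n) dist_code u C.

Definition deep_hole n (C : {set word n}) (u : word n) : bool :=
  dist_code u C == covering_radius C.

End Gab.

From HB Require Import structures.
From mathcomp Require Import all_boot all_order all_algebra all_field zify.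
Set Implicit Arguments. Unset Strict Implicit. Unset Printing Implicit Defensive.
Import GRing.Theory.
Local Open Scope ring_scope.

(* A q-linearized polynomial is F_q-linear, so it vanishes on the F_q-span of
   its roots; if it had d + 1 coefficients and vanished on d + 1 F_q-independent
   points, it would have q^(d+1) roots although its degree is at most q^d.
   Hence sigma_f agrees with a codeword (a polynomial of q-degree < k) in at most
   k positions, since their difference has q-degree exactly k: the distance is
   at least n - k.  Conversely evaluation at g_1, ..., g_k is injective, hence
   bijective, on polynomials of q-degree < k, so every word agrees with some
   codeword in k positions and the covering radius is n - k.  Finally
   f |-> sigma_f is injective on the (q^m - 1) q^(mk) polynomials of q-degree
   exactly k. *)

Lemma bigminn_leq_seq (I : eqType) (r : seq I) (P : pred I) (F : I -> nat) x i0 :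
  i0 \in r -> P i0 -> (\big[minn/x]_(i <- r | P i) F i <= F i0)%N.
Proof.
elim: r => // i r IHr; rewrite in_cons big_cons => /predU1P[-> -> | r_i0 P_i0].
  exact: geq_minl.
by case: (P i); rewrite ?geq_min IHr ?orbT.
Qed.

Section QLinearized.
Variables (L : finFieldType) (q : nat).

Definition qlin_word n (h : 'I_n -> L) d (a : {ffun 'I_d -> L}) : word L n :=
  [ffun i => qlin_eval q a (h i)].

(* The coefficient vector of a + x X^(q^d). *)
Definition qext d (a : {ffun 'I_d -> L}) (x : L) : {ffun 'I_d.+1 -> L} :=
  [ffun j => if unlift ord_max j is Some i then a i else x].

Definition qpoly d (a : {ffun 'I_d -> L}) : {poly L} :=
  \sum_(i < d) a i *: 'X^(q ^ i).

Lemma qlin_wordE n (h : 'I_n -> L) d (a : {ffun 'I_d -> L}) i :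
  qlin_word h a i = qlin_eval q a (h i).
Proof. exact: ffunE. Qed.

Lemma in_Fq_expn (c : L) i : in_Fq q c -> c ^+ (q ^ i) = c.
Proof.
move=> /eqP c_q; elim: i => [|i IHi]; first by rewrite expn0 expr1.
by rewrite expnSr exprM IHi c_q.
Qed.

Lemma qlin_evalB d (a b : {ffun 'I_d -> L}) x :
  qlin_eval q (a - b) x = qlin_eval q a x - qlin_eval q b x.
Proof. by rewrite /qlin_eval -sumrB; apply: eq_bigr => i _; rewrite !ffunE mulrBl. Qed.

Lemma qlin_evalZ d (a : {ffun 'I_d -> L}) (c x : L) :
  in_Fq q c -> qlin_eval q a (c * x) = c * qlin_eval q a x.
Proof.
move=> Fq_c; rewrite /qlin_eval mulr_sumr; apply: eq_bigr => i _.
by rewrite exprMn (in_Fq_expn _ Fq_c) mulrCA.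
Qed.

Lemma qext_lift d (a : {ffun 'I_d -> L}) x i : qext a x (lift ord_max i) = a i.
Proof. by rewrite ffunE liftK. Qed.

Lemma qext_max d (a : {ffun 'I_d -> L}) x : qext a x ord_max = x.
Proof. by rewrite ffunE unlift_none. Qed.

Lemma qext_inj d (a b : {ffun 'I_d -> L}) x y :
  qext a x = qext b y -> a = b /\ x = y.
Proof.
move=> eq_ab; split; last by rewrite -(qext_max a x) eq_ab qext_max.
by apply/ffunP => i; rewrite -(qext_lift a x) eq_ab qext_lift.
Qed.

Lemma qlin_eval_qext d (a : {ffun 'I_d -> L}) x y :
  qlin_eval q (qext a x) y = qlin_eval q a y + x * y ^+ (q ^ d).
Proof.
rewrite /qlin_eval big_ord_recr qext_max; congr (_ + _); apply: eq_bigr => i _.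
have -> : widen_ord (leqnSn d) i = lift ord_max i by apply: val_inj; rewrite [RHS]lift_max.
by rewrite qext_lift lift_max.
Qed.

Lemma horner_qpoly d (a : {ffun 'I_d -> L}) x : (qpoly a).[x] = qlin_eval q a x.
Proof. by rewrite horner_sum; apply: eq_bigr => i _; rewrite hornerZ hornerXn. Qed.

Lemma size_qpoly d (a : {ffun 'I_d.+1 -> L}) :
  (0 < q)%N -> (size (qpoly a) <= (q ^ d).+1)%N.
Proof.
move=> q_gt0; apply: (big_ind (fun P : {poly L} => size P <= (q ^ d).+1)%N).
- by rewrite size_poly0.
- by move=> P Q szP szQ; rewrite (leq_trans (size_polyD _ _)) // geq_max szP.
- move=> i _; rewrite (leq_trans (size_scale_leq _ _)) // size_polyXn ltnS.
  by rewrite leq_pexp2l // -ltnS.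
Qed.

Lemma coef_qpoly d (a : {ffun 'I_d -> L}) (i : 'I_d) : (1 < q)%N -> (qpoly a)`_(q ^ i) = a i.
Proof.
move=> q_gt1; rewrite coef_sum (bigD1 i) //= coefZ coefXn eqxx mulr1 big1 ?addr0 //.
move=> j ne_ji; rewrite coefZ coefXn (inj_eq (expnI q_gt1)) val_eqE eq_sym.
by rewrite (negbTE ne_ji) mulr0.
Qed.

Lemma Fq_lin_indep_comp n d (g : 'I_n -> L) (e : 'I_d -> 'I_n) :
  (0 < q)%N -> injective e -> Fq_lin_indep q g -> Fq_lin_indep q (g \o e).
Proof.
move=> q_gt0 inj_e indep_g c Fq_c sum_c0 i.
pose c' j := \sum_(i' | e i' == j) c i'.
have c'_e i' : c' (e i') = c i'.
  by rewrite /c' (big_pred1 i') // => i''; rewrite /= (inj_eq inj_e).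
have Fq_c' j : in_Fq q (c' j).
  case: (pickP (fun i' => e i' == j)) => [i' /eqP <- | no_i]; first by rewrite c'_e.
  by rewrite /c' big_pred0 // /in_Fq expr0n gtn_eqF.
have sum_c' : \sum_j c' j * g j = \sum_i' c i' * g (e i').
  rewrite (partition_big e xpredT) //=; apply: eq_bigr => j _.
  by rewrite /c' mulr_suml; apply: eq_bigr => i' /eqP ->.
by rewrite -c'_e (indep_g c' Fq_c') // sum_c'.
Qed.

Section Frobenius.
Variables (p e : nat).
Hypotheses (pcharL : p \in [pchar L]) (q_def : q = (p ^ e)%N).

Lemma pnat_pchar_expq i : [pchar L].-nat (q ^ i)%N.
Proof. by rewrite q_def -expnM pnatX pnatE ?(pcharf_prime pcharL) ?pcharL. Qed.

Lemma qlin_evalD d (a : {ffun 'I_d -> L}) x y :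
  qlin_eval q a (x + y) = qlin_eval q a x + qlin_eval q a y.
Proof.
rewrite /qlin_eval -big_split; apply: eq_bigr => i _.
by rewrite exprDn_pchar ?pnat_pchar_expq // mulrDr.
Qed.

Lemma qlin_eval_sum d (a : {ffun 'I_d -> L}) (I : Type) (r : seq I) (F : I -> L) :
  qlin_eval q a (\sum_(i <- r) F i) = \sum_(i <- r) qlin_eval q a (F i).
Proof.
have q_gt0 : (0 < q)%N by rewrite q_def expn_gt0 prime_gt0 ?(pcharf_prime pcharL).
apply: (big_morph _ (qlin_evalD a)); rewrite /qlin_eval big1 // => i _.
by rewrite expr0n expn_eq0 (gtn_eqF q_gt0) mulr0.
Qed.

Lemma in_FqB (x y : L) : in_Fq q x -> in_Fq q y -> in_Fq q (x - y).
Proof.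
move=> /eqP x_q /eqP y_q; apply/eqP; have := pnat_pchar_expq 1; rewrite expn1 => pq.
by rewrite exprDn_pchar // exprNn_pchar // x_q y_q.
Qed.

End Frobenius.
End QLinearized.

Section Gabidulin.
Variables (L : finFieldType) (p e q m : nat).
Hypotheses (pcharL : p \in [pchar L]) (e_gt0 : (0 < e)%N) (q_def : q = (p ^ e)%N).
Hypotheses (m_gt0 : (0 < m)%N) (cardL : #|L| = (q ^ m)%N).

Let q_gt1 : (1 < q)%N.
Proof. by rewrite q_def -(expn0 p) ltn_exp2l // prime_gt1 // (pcharf_prime pcharL). Qed.

Let q_gt0 : (0 < q)%N. Proof. exact: ltnW. Qed.

(* X^q - X divides X^(q^m) - X, which splits into distinct linear factors. *)
Lemma card_Fq : #|[pred x : L | in_Fq q x]| = q.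
Proof.
pose P : {poly L} := 'X^q - 'X.
have P_dvd j : P %| 'X^(q ^ j.+1) - 'X.
  elim: j => [|j IHj]; first by rewrite expn1.
  have -> : 'X^(q ^ j.+2) - 'X = ('X^(q ^ j.+1) ^+ q - 'X ^+ q) + P :> {poly L}.
    by rewrite /P addrA subrK -exprM -expnSr.
  by rewrite dvdp_add // subrXX dvdp_mulr.
have := P_dvd m.-1; rewrite prednK // -cardL finField_genPoly.
case/dvdp_prod_XsubC=> msk eqp_P.
have uniq_roots : uniq (mask msk (index_enum L)) by rewrite mask_uniq ?index_enum_uniq.
have size_P : size P = q.+1.
  by rewrite /P size_polyDl ?size_polyXn // size_polyN size_polyX ltnS.
have -> : #|[pred x : L | in_Fq q x]| = #|[pred x | x \in mask msk (index_enum L)]|.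
  apply: eq_card => x /=; rewrite -root_prod_XsubC -(eqp_root eqp_P) /root /P.
  by rewrite !hornerE subr_eq0.
have := eqp_size eqp_P; rewrite size_P size_prod_XsubC => -[->].
exact/card_uniqP.
Qed.

Definition Fq_span d (h : 'I_d -> L) (c : {ffun 'I_d -> {x : L | in_Fq q x}}) : L :=
  \sum_i val (c i) * h i.

Lemma Fq_span_inj d (h : 'I_d -> L) : Fq_lin_indep q h -> injective (Fq_span h).
Proof.
move=> indep_h c1 c2 eq_c12; apply/ffunP => i; apply/val_inj/eqP.
rewrite -subr_eq0; apply/eqP.
apply: (indep_h (fun j => val (c1 j) - val (c2 j))) => [j|].
  exact: (in_FqB pcharL q_def (valP _) (valP _)).
under eq_bigr do rewrite mulrBl.
by rewrite sumrB; apply/eqP; rewrite subr_eq0; apply/eqP.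
Qed.

Lemma qlin_eval_Fq_span d (a : {ffun 'I_d -> L}) (h : 'I_d -> L) c :
  (forall i, qlin_eval q a (h i) = 0) -> qlin_eval q a (Fq_span h c) = 0.
Proof.
move=> a_h0; rewrite (qlin_eval_sum pcharL q_def) big1 // => i _.
by rewrite qlin_evalZ ?a_h0 ?mulr0 //; apply: valP.
Qed.

Lemma qlin_eval_indep_eq0 d (a : {ffun 'I_d -> L}) (h : 'I_d -> L) :
  Fq_lin_indep q h -> (forall i, qlin_eval q a (h i) = 0) -> a = 0.
Proof.
case: d a h => [|d] a h indep_h a_h0; first by apply/ffunP => -[].
apply/eqP; apply: contraT => a_neq0.
have P_neq0 : qpoly q a != 0.
  apply: contra a_neq0 => /eqP P0; apply/eqP/ffunP => i.
  by rewrite -(coef_qpoly a i q_gt1) P0 coef0 ffunE.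
pose roots := map (Fq_span h) (enum {: {ffun 'I_d.+1 -> {x : L | in_Fq q x}}}).
have roots_P : all (root (qpoly q a)) roots.
  by apply/allP => _ /mapP[c _ ->]; rewrite /root horner_qpoly qlin_eval_Fq_span.
have uniq_roots : uniq roots by rewrite (map_inj_uniq (Fq_span_inj indep_h)) enum_uniq.
have := max_poly_roots P_neq0 roots_P uniq_roots.
rewrite size_map -cardE card_ffun card_sig card_Fq card_ord => lt_roots.
have := leq_trans lt_roots (size_qpoly a q_gt0).
by rewrite ltnS leqNgt ltn_exp2l // ltnSn.
Qed.

Lemma qlin_eval_eq0 n d (g : 'I_n -> L) (A : {set 'I_n}) (a : {ffun 'I_d -> L}) :
  Fq_lin_indep q g -> (d <= #|A|)%N ->
  {in A, forall i, qlin_eval q a (g i) = 0} -> a = 0.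
Proof.
move=> indep_g le_dA a_gA0.
pose w (i : 'I_d) := enum_val (widen_ord le_dA i).
have inj_w : injective w by move=> i j /enum_val_inj [/val_inj].
apply: (qlin_eval_indep_eq0 (h := g \o w)) => [|i].
  exact: Fq_lin_indep_comp q_gt0 inj_w indep_g.
exact/a_gA0/enum_valP.
Qed.

Lemma qlin_word_inj n d (h : 'I_n -> L) :
  Fq_lin_indep q h -> (d <= n)%N -> injective (@qlin_word L q n h d).
Proof.
move=> indep_h le_dn a b eq_ab; apply/eqP; rewrite -subr_eq0; apply/eqP.
apply: (qlin_eval_eq0 (A := setT) indep_h) => [|i _]; first by rewrite cardsT card_ord.
by rewrite qlin_evalB -!(qlin_wordE q h) eq_ab subrr.
Qed.

Section Code.
Variables (n : nat) (g : 'I_n -> L).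
Hypothesis indep_g : Fq_lin_indep q g.

(* f - a has q-degree d, so it cannot vanish at d + 1 of the independent g i. *)
Lemma dH_qlin_word_ge d (f : {ffun 'I_d.+1 -> L}) (a : {ffun 'I_d -> L}) :
  f ord_max != 0 -> (n - d <= dH (qlin_word q g f) (qlin_word q g a))%N.
Proof.
move=> f_top; rewrite leqNgt; apply: contra f_top => dH_lt.
pose A := [set i | qlin_word q g f i == qlin_word q g a i].
have cardA : (#|A| + dH (qlin_word q g f) (qlin_word q g a))%N = n.
  rewrite /dH -[RHS]card_ord -(cardsC A); congr (_ + _)%N.
  by apply: eq_card => i; rewrite !inE.
have lt_dA : (d < #|A|)%N by move: cardA dH_lt; lia.
have f_eq : f - qext a 0 = 0.
  apply: (qlin_eval_eq0 indep_g lt_dA) => i; rewrite inE !qlin_wordE => /eqP f_a.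
  by rewrite qlin_evalB qlin_eval_qext mul0r addr0 f_a subrr.
by move/eqP: f_eq; rewrite subr_eq0 => /eqP ->; rewrite qext_max.
Qed.

Lemma qlin_word_interpolate d (u : word L n) : (d <= n)%N ->
  exists a : {ffun 'I_d -> L}, (dH u (qlin_word q g a) <= n - d)%N.
Proof.
move=> le_dn; pose w (i : 'I_d) := widen_ord le_dn i.
have inj_w : injective w by move=> i j [/val_inj].
have indep_gw := Fq_lin_indep_comp q_gt0 inj_w indep_g.
have [ev_inv _ ev_invK] := injF_bij (qlin_word_inj indep_gw (leqnn d)).
pose a := ev_inv [ffun i => u (w i)]; exists a.
have agree i : u (w i) = qlin_word q g a (w i).
  have := congr1 (fun v : word L d => v i) (ev_invK [ffun i => u (w i)]).
  by rewrite /= !qlin_wordE ffunE.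
pose W := [set w i | i : 'I_d].
have sub_W : [set i | u i != qlin_word q g a i] \subset ~: W.
  by apply/subsetP => i; rewrite !inE; apply: contra => /imsetP[j _ ->]; rewrite agree.
by rewrite (leq_trans (subset_leq_card sub_W)) // cardsCs setCK card_imset // !card_ord.
Qed.

Lemma dist_code_gabidulin_le d (u : word L n) :
  (d <= n)%N -> (dist_code u (gabidulin q d g) <= n - d)%N.
Proof.
move=> le_dn; have [a le_ua] := qlin_word_interpolate u le_dn.
by apply: leq_trans le_ua; apply: bigminn_leq_seq (mem_index_enum _) _; apply: imset_f.
Qed.

Lemma dist_code_qlin_word d (f : {ffun 'I_d.+1 -> L}) :
  f ord_max != 0 -> (d <= n)%N ->
  dist_code (qlin_word q g f) (gabidulin q d g) = (n - d)%N.
Proof.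
move=> f_top le_dn; apply/anti_leq; rewrite dist_code_gabidulin_le //=.
apply: (big_ind (fun x => n - d <= x)%N) => [|x y le_x le_y|c /imsetP[a _ ->]].
- exact: leq_subr.
- by rewrite leq_min le_x le_y.
- exact: dH_qlin_word_ge.
Qed.

Lemma covering_radius_gabidulin d :
  (d <= n)%N -> covering_radius (gabidulin q d g) = (n - d)%N.
Proof.
move=> le_dn; apply/anti_leq/andP; split.
  by apply/bigmax_leqP => u _; apply: dist_code_gabidulin_le.
rewrite -(@dist_code_qlin_word d (qext 0 1)) ?qext_max ?oner_neq0 //.
exact: leq_bigmax.
Qed.

Lemma deep_hole_qlin_word d (f : {ffun 'I_d.+1 -> L}) :
  f ord_max != 0 -> (d <= n)%N -> deep_hole (gabidulin q d g) (qlin_word q g f).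
Proof.
by move=> f_top le_dn; rewrite /deep_hole covering_radius_gabidulin ?dist_code_qlin_word.
Qed.

Lemma card_deep_holes_gabidulin d : (d < n)%N ->
  ((q ^ m - 1) * q ^ (m * d) <= #|[set u | deep_hole (gabidulin q d g) u]|)%N.
Proof.
move=> lt_dn.
pose hole (ax : {ffun 'I_d -> L} * {x : L | x != 0}) := qlin_word q g (qext ax.1 (val ax.2)).
have inj_hole : injective hole.
  by move=> [a x] [b y] /(qlin_word_inj indep_g lt_dn)/qext_inj /= [-> /val_inj ->].
have holes : hole @: setT \subset [set u | deep_hole (gabidulin q d g) u].
  apply/subsetP => u /imsetP[[a x] _ ->].
  by rewrite inE deep_hole_qlin_word ?qext_max ?(valP x) // ltnW.
apply: leq_trans (subset_leq_card holes).
rewrite card_imset // cardsT card_prod card_ffun card_sig cardC1 !card_ord cardL.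
by rewrite -expnM subn1 mulnC.
Qed.

End Code.
End Gabidulin.

Theorem mainTheorem5 (q m n k : nat) (L : finFieldType) (g : 'I_n -> L)
    (f : {ffun 'I_k.+1 -> L}) :
  is_prime_power q -> #|L| = (q ^ m)%N ->
  (1 <= k)%N -> (k < n)%N -> (n <= m)%N ->
  Fq_lin_indep q g ->
  f ord_max != 0 ->
  let C := gabidulin q k g in
  let sigma_f : word L n := [ffun i => qlin_eval q f (g i)] in
  [/\ dist_code sigma_f C = (n - k)%N,
      covering_radius C = (n - k)%N,
      deep_hole C sigma_f
    & ((q ^ m - 1) * q ^ (m * k) <= #|[set u | deep_hole C u]|)%N].
Proof.
move=> [p [e [p_prime [e_gt0 q_def]]]] cardL _ lt_kn le_nm indep_g f_top C sigma_f.
have pcharL : p \in [pchar L].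
  by apply: (card_finPcharP (n := (e * m)%N)); rewrite // cardL q_def expnM.
have m_gt0 : (0 < m)%N by lia.
have le_kn := ltnW lt_kn.
split.
- exact: (dist_code_qlin_word pcharL e_gt0 q_def m_gt0 cardL indep_g f_top le_kn).
- exact: (covering_radius_gabidulin pcharL e_gt0 q_def m_gt0 cardL indep_g le_kn).
- exact: (deep_hole_qlin_word pcharL e_gt0 q_def m_gt0 cardL indep_g f_top le_kn).
- exact: (card_deep_holes_gabidulin pcharL e_gt0 q_def m_gt0 cardL indep_g lt_kn).
Qed.
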